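(* Let $G$ be a stitched 2-ichromatic ordered graph with vertices $v_1<\dots<v_{m+n}$ whose parts are $\{v_1,\ldots,v_m\}$ and $\{v_{m+1},\ldots,v_{m+n}\}$. If $v_1v_{m+n}$ and $v_mv_{m+1}$ are edges of $G$, then $R(G)\ge 5r+1$, where $r=\min(m,n)-1$.
   Context: An ordered graph is a graph together with a specified linear ordering of its vertex set. An ordered graph $G$ is contained in an ordered graph $H$ if there is an order-preserving injection $V(G)\to V(H)$ mapping edges to edges. An interval coloring of an ordered graph is a partition of its vertex set into independent sets each consisting of consecutive vertices (called parts); an ordered graph is 2-ichromatic if its minimum number of parts in an interval coloring is 2. A 2-ichromatic ordered graph is stitched if the four vertices consisting of the first and last vertex of each of the two parts lie in a single connected component. $R(G)$ denotes the 2-color ordered Ramsey number: the minimum $N$ such that every 2-coloring of the edges of the ordered complete graph on $N$ vertices contains a monochromatic copy of $G$. *)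

From mathcomp Require Import all_boot.
Set Implicit Arguments. Unset Strict Implicit. Unset Printing Implicit Defensive.

(* An ordered graph on k vertices: vertex set 'I_k with its natural order,
   edge relation e (symmetric, irreflexive). Vertex v_i of the paper is i-1. *)
Definition ordgraph (k : nat) (e : rel 'I_k) : Prop :=
  symmetric e /\ irreflexive e.

Definition interval_coloring (k p : nat) (e : rel 'I_k) (col : 'I_k -> 'I_p) : Prop :=
  [/\ (forall x y : 'I_k, x <= y -> col x <= col y),
      (forall c : 'I_p, exists x, col x = c) &
      (forall x y : 'I_k, e x y -> col x != col y)].

Definition has_interval_coloring (k p : nat) (e : rel 'I_k) : Prop :=
  exists col : 'I_k -> 'I_p, interval_coloring e col.

Definition two_ichromatic (k : nat) (e : rel 'I_k) : Prop :=
  has_interval_coloring 2 e /\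
  (forall p, has_interval_coloring p e -> 2 <= p).

Definition parts_split (m n : nat) (e : rel 'I_(m + n)) : Prop :=
  [/\ 0 < m, 0 < n & forall x y : 'I_(m + n), e x y -> (x < m) != (y < m)].

(* Stitched (w.r.t. the parts above): first and last vertices of the two
   parts, i.e. vertices 0, m-1, m, m+n-1, lie in one connected component. *)
Definition stitched (m n : nat) (e : rel 'I_(m + n)) : Prop :=
  forall x y : 'I_(m + n),
    val x \in [:: 0; m.-1; m; (m + n).-1] ->
    val y \in [:: 0; m.-1; m; (m + n).-1] ->
    connect e x y.

(* A 2-coloring of the edges of the ordered complete graph on N vertices:
   the edge {i, j} with i < j receives color c i j. *)
Definition coloring (N : nat) := 'I_N -> 'I_N -> bool.

Definition mono_copy (k N : nat) (e : rel 'I_k) (c : coloring N) (b : bool) : Prop :=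
  exists f : 'I_k -> 'I_N,
    (forall x y : 'I_k, x < y -> f x < f y) /\
    (forall x y : 'I_k, x < y -> e x y -> c (f x) (f y) = b).

Definition ramsey_prop (k : nat) (e : rel 'I_k) (N : nat) : Prop :=
  forall c : coloring N, exists b, mono_copy e c b.

Definition ramsey_ge (k : nat) (e : rel 'I_k) (M : nat) : Prop :=
  forall N, ramsey_prop e N -> M <= N.

From mathcomp Require Import all_boot.

(* Partition the N <= 5r vertices of K_N into five consecutive blocks 0..4 of
   r vertices, and colour an edge blue exactly when its end blocks are equal or
   form one of the pairs {0,4}, {1,2}, {2,3}; on blocks, the blue graph has the
   two components {0,4} and {1,2,3}.  As both parts of G have more than r
   vertices, a copy of G puts v_1 < v_m <= v_{m+1} < v_{m+n} into blocks
   A < B <= C < D.  The edges v_1v_{m+n} and v_mv_{m+1} then join blocks A,D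
   and B,C, which are never both red, and are both blue only when A is outer
   and B is not.  But in a blue copy stitchedness joins v_1 to v_m by a blue
   path, so A and B lie in the same blue component. *)

Lemma leq_homo_ltn_gap {k N} {f : 'I_k -> 'I_N} :
  {homo f : x y / x < y} -> forall {x y : 'I_k}, x <= y -> f x + (y - x) <= f y.
Proof.
move=> f_incr x y /subnKC; move: (y - x) => d; elim: d y => [|d IHd] y def_y.
  by rewrite addn0; have -> : x = y by apply/val_inj; rewrite /= -def_y addn0.
have lt_zk : x + d < k by rewrite (leq_trans _ (ltn_ord y)) // -def_y addnS.
have lt_zy : Ordinal lt_zk < y by rewrite /= -def_y addnS.
by rewrite addnS (leq_ltn_trans (IHd (Ordinal lt_zk) erefl)) ?f_incr.
Qed.

Lemma ltn_div2r_gap {i j r} : 0 < r -> i + r <= j -> i %/ r < j %/ r.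
Proof.
move=> r_gt0 le_irj; rewrite -addn1 -(divnDMl _ _ r_gt0) mul1n.
exact: leq_div2r.
Qed.

Definition block_blue (a b : nat) : bool :=
  [|| a == b, (a == 0) && (b == 4), (a == 1) && (b == 2) | (a == 2) && (b == 3)].

Definition outer_block (a : nat) : bool := a \in [:: 0; 4].

Definition block_coloring (N r : nat) : coloring N :=
  fun i j => block_blue (i %/ r) (j %/ r).

Lemma block_blue_outer {a b} : block_blue a b -> outer_block a = outer_block b.
Proof.
by case/or4P=> [/eqP->|/andP[/eqP-> /eqP->]|/andP[/eqP-> /eqP->]|/andP[/eqP-> /eqP->]].
Qed.

Lemma block_blue_nested {a b c d} :
  a < b -> b <= c -> c < d -> d < 5 -> block_blue a d = block_blue b c ->
  block_blue a d && (outer_block a != outer_block b).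
Proof.
by case: a => [|[|[|[|[|a]]]]]; case: b => [|[|[|[|[|b]]]]];
   case: c => [|[|[|[|[|c]]]]]; case: d => [|[|[|[|[|d]]]]].
Qed.

Lemma connect_mono_copy {k N} {e : rel 'I_k} {c : coloring N} {b} {f : 'I_k -> 'I_N}
    (P : pred 'I_N) :
  symmetric e -> {homo f : x y / x < y} ->
  (forall x y : 'I_k, x < y -> e x y -> c (f x) (f y) = b) ->
  (forall i j : 'I_N, i < j -> c i j = b -> P i = P j) ->
  forall x y, connect e x y -> P (f x) = P (f y).
Proof.
move=> e_sym f_incr f_col P_col x y; apply: (closed_connect (a := [pred u | P (f u)])).
move=> u v e_uv /=; case: (ltngtP u v) => [lt_uv|lt_vu|/val_inj->] //.
- by apply: P_col; rewrite ?f_incr ?f_col.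
- by apply/esym/P_col; rewrite ?f_incr ?f_col // e_sym.
Qed.

Lemma ltn_divr_homo_gap {k N r} {f : 'I_k -> 'I_N} :
  0 < r -> {homo f : x y / x < y} ->
  forall x y : 'I_k, x + r <= y -> f x %/ r < f y %/ r.
Proof.
move=> r_gt0 f_incr x y le_xry; have le_xy : x <= y := leq_trans (leq_addr _ _) le_xry.
apply: ltn_div2r_gap => //; rewrite (leq_trans _ (leq_homo_ltn_gap f_incr le_xy)) //.
by rewrite leq_add2l leq_subRL.
Qed.

Lemma block_coloring_no_mono_copy m n N r (e : rel 'I_(m + n)) b :
  0 < r -> r <= m.-1 -> r <= n.-1 -> N <= 5 * r ->
  symmetric e -> stitched e ->
  (forall x y : 'I_(m + n), val x = 0 -> val y = (m + n).-1 -> e x y) ->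
  (forall x y : 'I_(m + n), val x = m.-1 -> val y = m -> e x y) ->
  ~ mono_copy e (block_coloring N r) b.
Proof.
move=> r_gt0 r_le_m r_le_n N_le e_sym st e_ends e_mid [f [f_incr f_col]].
have m_gt0 : 0 < m by rewrite (leq_trans r_gt0) // (leq_trans r_le_m) ?leq_pred.
have n_gt0 : 0 < n by rewrite (leq_trans r_gt0) // (leq_trans r_le_n) ?leq_pred.
have lt_0 : 0 < m + n by rewrite addn_gt0 m_gt0.
have lt_m1 : m.-1 < m + n by rewrite (leq_ltn_trans (leq_pred m)) // -{1}[m]addn0 ltn_add2l.
have lt_m : m < m + n by rewrite -{1}[m]addn0 ltn_add2l.
have lt_l : (m + n).-1 < m + n by rewrite prednK.
pose v0 := Ordinal lt_0; pose vm1 := Ordinal lt_m1; pose vm := Ordinal lt_m; pose vl := Ordinal lt_l.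
pose blk (x : 'I_(m + n)) := f x %/ r.
have lt_AB : blk v0 < blk vm1 by apply: ltn_divr_homo_gap.
have le_BC : blk vm1 <= blk vm by rewrite leq_div2r // ltnW ?f_incr //= prednK.
have lt_CD : blk vm < blk vl.
  by apply: ltn_divr_homo_gap; rewrite //= -subn1 -addnBA ?leq_add2l ?subn1.
have lt_D5 : blk vl < 5 by rewrite ltn_divLR // (leq_trans (ltn_ord _) N_le).
have col_AD : block_coloring N r (f v0) (f vl) = b.
  by apply: f_col; [rewrite /= -ltnS prednK // (leq_add m_gt0 n_gt0) | exact: e_ends].
have col_BC : block_coloring N r (f vm1) (f vm) = b.
  by apply: f_col; [rewrite /= prednK | exact: e_mid].
have /andP[blue_AD outer_AB] :=
  block_blue_nested lt_AB le_BC lt_CD lt_D5 (etrans col_AD (esym col_BC)).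
have outer_blk x y : connect e x y -> outer_block (blk x) = outer_block (blk y).
  apply: (connect_mono_copy [pred i : 'I_N | outer_block (i %/ r)] e_sym f_incr f_col).
  move=> i j _ col_ij; apply: block_blue_outer.
  exact: etrans col_ij (etrans (esym col_AD) blue_AD).
have conn_AB : connect e v0 vm1 by apply: st; rewrite !inE eqxx ?orbT.
by rewrite (outer_blk _ _ conn_AB) eqxx in outer_AB.
Qed.

Theorem corollary3p2 (m n : nat) (e : rel 'I_(m + n)) :
  ordgraph e ->
  two_ichromatic e ->
  parts_split e ->
  stitched e ->
  (forall x y : 'I_(m + n), val x = 0 -> val y = (m + n).-1 -> e x y) ->
  (forall x y : 'I_(m + n), val x = m.-1 -> val y = m -> e x y) ->
  ramsey_ge e (5 * (minn m n).-1 + 1).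
Proof.
move=> [e_sym _] _ [m_gt0 n_gt0 _] st e_ends e_mid N ramsey_N.
rewrite leqNgt addn1 ltnS; apply/negP => N_le; set r := (minn m n).-1 in N_le.
have [r0 | r_gt0] := posnP r.
  have [b [f _]] := ramsey_N (fun _ _ => true).
  have lt_0 : 0 < m + n by rewrite addn_gt0 m_gt0.
  by have := ltn_ord (f (Ordinal lt_0)); rewrite ltnNge (leq_trans N_le) // r0.
have r_le_m : r <= m.-1 by rewrite /r -!subn1 leq_sub2r // geq_minl.
have r_le_n : r <= n.-1 by rewrite /r -!subn1 leq_sub2r // geq_minr.
have [b copy] := ramsey_N (block_coloring N r).
exact: block_coloring_no_mono_copy r_gt0 r_le_m r_le_n N_le e_sym st e_ends e_mid copy.
Qed.
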